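(* Let $x\in\mathbb{R}^n$, $\Delta>0$, $p=(n+1)(n+2)/2$, and take the $p$ points $x$; $x+\Delta e_i$ ($i=1,\ldots,n$); $x-\Delta e_i$ ($i=1,\ldots,n$); $x+\Delta(e_i+e_j)$ ($1\le i<j\le n$). Let $\hat Q\in\mathbb{R}^{p\times p}$ be the matrix whose rows are $\phi(\hat s)^T$ for $\hat s=(y-x)/\Delta$ ranging over these points $y$. Then $\|\hat Q^{-1}\|_\infty\le 8$.
   Context: $e_i$ is the $i$-th coordinate vector. $\phi:\mathbb{R}^n\to\mathbb{R}^p$ is the natural quadratic basis $\phi(z)=[1,z_1,\ldots,z_n,\tfrac12z_1^2,z_1z_2,\ldots,z_1z_n,\tfrac12z_2^2,z_2z_3,\ldots,z_{n-1}z_n,\tfrac12z_n^2]^T$. $\|A\|_\infty$ is the maximum absolute row sum. *)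

From HB Require Import structures.
From mathcomp Require Import all_boot all_order all_algebra.
Set Implicit Arguments. Unset Strict Implicit. Unset Printing Implicit Defensive.
Import Order.TTheory GRing.Theory Num.Theory.
Local Open Scope ring_scope.

Section Defs.
Variable R : realFieldType.
Variable n : nat.

Definition pdim : nat := ((n.+1 * n.+2) %/ 2)%N.

Definition coord_vec (i : 'I_n) : 'rV[R]_n := delta_mx 0 i.

(* natural quadratic basis
   phi(z) = [1, z_1..z_n, 1/2 z_1^2, z_1 z_2, .., z_1 z_n, 1/2 z_2^2, z_2 z_3, .., 1/2 z_n^2] *)
Definition phi (z : 'rV[R]_n) : seq R :=
  1 :: [seq z 0 i | i <- enum 'I_n] ++
  flatten [seq [seq (if i == j then z 0 i ^+ 2 / 2 else z 0 i * z 0 j)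
               | j : 'I_n <- [seq j : 'I_n <- enum 'I_n | (nat_of_ord i <= nat_of_ord j)%N]] | i <- enum 'I_n].

Definition sample_points (x : 'rV[R]_n) (D : R) : seq 'rV[R]_n :=
  [:: x] ++ [seq x + D *: coord_vec i | i <- enum 'I_n]
         ++ [seq x - D *: coord_vec i | i <- enum 'I_n]
         ++ flatten [seq [seq x + D *: (coord_vec i + coord_vec j)
                         | j : 'I_n <- [seq j : 'I_n <- enum 'I_n | (nat_of_ord i < nat_of_ord j)%N]] | i <- enum 'I_n].

Definition Qhat (x : 'rV[R]_n) (D : R) : 'M[R]_pdim :=
  \matrix_(r < pdim, c < pdim)
     nth 0 (phi (D^-1 *: (nth 0 (sample_points x D) r - x))) c.

End Defs.

Definition mx_norm_inf (R : realFieldType) (m k : nat) (A : 'M[R]_(m, k)) : R :=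
  \big[Num.max/0]_(i < m) \sum_(j < k) `|A i j|.

From HB Require Import structures.
From mathcomp Require Import all_boot all_order all_algebra.
From mathcomp Require Import zify ring lra.
Import Order.TTheory GRing.Theory Num.Theory.
Local Open Scope ring_scope.

(* For every basis function [b] there is a finite-difference stencil on the
   sample points (the value at [x], a central difference, a second difference or
   a mixed difference) which returns the [b]-coefficient of any quadratic, i.e.
   is biorthogonal to the basis.  The stencils are therefore the rows of a left
   inverse of [Qhat], and the absolute weights of each stencil add up to at most
   4 (e.g. 1 + 1 + 1 + 1 for the mixed difference), so in fact
   [mx_norm_inf (invmx (Qhat x D)) <= 4]. *)

Lemma sum_seq_indicator (R : pzSemiRingType) (T : eqType) (s : seq T) (a : T)
    (F : T -> R) :
  uniq s -> a \in s -> \sum_(t <- s) F t * (t == a)%:R = F a.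
Proof.
move=> s_uniq a_in; rewrite (bigD1_seq a) //= eqxx mulr1 big1 ?addr0 // => t /negbTE->.
exact: mulr0.
Qed.

Lemma mx_norm_inf_le (R : realFieldType) m k (A : 'M[R]_(m, k)) (c : R) :
  0 <= c -> (forall i, \sum_j `|A i j| <= c) -> mx_norm_inf A <= c.
Proof. by move=> c_ge0 A_rows; apply: bigmax_le. Qed.

Lemma invmx_left {R : comUnitRingType} {m : nat} {A B : 'M[R]_m} :
  B *m A = 1%:M -> invmx A = B.
Proof.
move=> BA; have [_ A_unit] := mulmx1_unit BA.
by rewrite -[invmx A]mul1mx -BA -mulmxA mulmxV // mulmx1.
Qed.

Notation pt_center := None (only parsing).
Notation pt_plus i := (Some (inl (inl i))) (only parsing).
Notation pt_minus i := (Some (inl (inr i))) (only parsing).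
Notation pt_sum i j := (Some (inr (i, j))) (only parsing).
Notation bs_one := None (only parsing).
Notation bs_lin i := (Some (inl i)) (only parsing).
Notation bs_quad i j := (Some (inr (i, j))) (only parsing).

Section Labels.
Variable n : nat.

Definition point_label := option (('I_n + 'I_n) + ('I_n * 'I_n)).

Definition basis_label := option ('I_n + ('I_n * 'I_n)).

Definition point_labels : seq point_label :=
  pt_center :: [seq pt_plus i | i <- enum 'I_n] ++ [seq pt_minus i | i <- enum 'I_n]
  ++ [seq pt_sum i j | i : 'I_n <- enum 'I_n,
                       j : 'I_n <- [seq j : 'I_n <- enum 'I_n | (i < j)%N]].

Definition basis_labels : seq basis_label :=
  bs_one :: [seq bs_lin i | i <- enum 'I_n]
  ++ [seq bs_quad i j | i : 'I_n <- enum 'I_n,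
                        j : 'I_n <- [seq j : 'I_n <- enum 'I_n | (i <= j)%N]].

Lemma pdimE : pdim n = 'C(n.+2, 2).
Proof. by rewrite /pdim bin2 divn2 mulnC. Qed.

Lemma size_filter_ord_geq (j : nat) : (j <= n)%N ->
  size [seq k : 'I_n <- enum 'I_n | (j <= k)%N] = (n - j)%N.
Proof.
move=> le_jn; rewrite size_filter -(count_map val (leq j)) val_enum_ord.
have lt_count : count (predC (leq j)) (iota 0 n) = j.
  rewrite -size_filter (eq_filter (a2 := fun k => (k < 0 + j)%N)) => [|k].
    by rewrite filter_iota_ltn // size_iota.
  by rewrite /= ltnNge.
by rewrite -[in RHS](size_iota 0 n) -(count_predC (leq j)) lt_count addnK.
Qed.

Lemma sum_enum_ord_subS : (\sum_(i <- enum 'I_n) (n - i.+1) = 'C(n, 2))%N.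
Proof. by rewrite -bin2_sum big_mkord [RHS](reindex_inj rev_ord_inj) enumT. Qed.

Lemma sum_enum_ord_sub : (\sum_(i <- enum 'I_n) (n - i) = 'C(n.+1, 2))%N.
Proof.
rewrite -bin2_sum big_mkord big_ord_recl add0n [RHS](reindex_inj rev_ord_inj) enumT.
by apply: eq_bigr => i _; rewrite /= /bump add1n subnSK.
Qed.

Lemma size_point_labels : size point_labels = pdim n.
Proof.
rewrite /= !size_cat !size_map size_allpairs_dep -enumT size_enum_ord sumnE big_map.
under eq_bigr => i _ do rewrite size_filter_ord_geq //.
rewrite sum_enum_ord_subS pdimE !binS bin1 bin0; lia.
Qed.

Lemma size_basis_labels : size basis_labels = pdim n.
Proof.
rewrite /= !size_cat !size_map size_allpairs_dep -enumT size_enum_ord sumnE big_map.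
under eq_bigr => i _ do rewrite size_filter_ord_geq 1?ltnW //.
rewrite sum_enum_ord_sub pdimE [in RHS]binS bin1; lia.
Qed.

Lemma point_labels_uniq : uniq point_labels.
Proof.
rewrite cons_uniq !mem_cat !cat_uniq !negb_or.
rewrite !map_inj_uniq ?enum_uniq; try by move=> ? ? [->].
rewrite allpairs_uniq_dep ?enum_uniq // => [|i _|[? ?] [? ?] _ _ [-> ->] //]; last first.
  by rewrite filter_uniq ?enum_uniq.
rewrite -enumT enum_uniq /= !andbT.
apply/and3P; split.
- by apply/and3P; split; apply/negP; [case/mapP|case/mapP|case/allpairsPdep => ? [? []]].
- apply/hasPn => l; rewrite mem_cat => /orP[/mapP[i _ ->]|/allpairsPdep[i [j [_ _ ->]]]];
  by apply/negP => /mapP[].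
- by apply/hasPn => l /allpairsPdep[i [j [_ _ ->]]]; apply/negP => /mapP[].
Qed.

Lemma basis_labels_uniq : uniq basis_labels.
Proof.
rewrite cons_uniq mem_cat cat_uniq negb_or.
rewrite map_inj_uniq ?enum_uniq; last by move=> ? ? [->].
rewrite allpairs_uniq_dep ?enum_uniq // => [|i _|[? ?] [? ?] _ _ [-> ->] //]; last first.
  by rewrite filter_uniq ?enum_uniq.
rewrite /= !andbT; apply/andP; split.
- by apply/andP; split; apply/negP; [case/mapP|case/allpairsPdep => ? [? []]].
- by apply/hasPn => l /allpairsPdep[i [j [_ _ ->]]]; apply/negP => /mapP[].
Qed.

Lemma center_in_point_labels : pt_center \in point_labels.
Proof. exact: mem_head. Qed.

Lemma plus_in_point_labels i : pt_plus i \in point_labels.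
Proof. by rewrite inE !mem_cat map_f ?mem_enum. Qed.

Lemma minus_in_point_labels i : pt_minus i \in point_labels.
Proof. by rewrite inE !mem_cat map_f ?mem_enum ?orbT. Qed.

Lemma sum_in_point_labels (i j : 'I_n) : (i < j)%N -> pt_sum i j \in point_labels.
Proof.
move=> lt_ij; rewrite inE !mem_cat; apply/or4P/Or44/allpairsPdep.
by exists i, j; rewrite !mem_enum mem_filter lt_ij mem_enum.
Qed.

Lemma quad_in_basis_labels (i j : 'I_n) : bs_quad i j \in basis_labels -> (i <= j)%N.
Proof.
rewrite inE mem_cat => /orP[//|/orP[/mapP[? _] //|]].
by case/allpairsPdep => i' [j' [_ + [-> ->]]]; rewrite mem_filter => /andP[].
Qed.

End Labels.

Section Stencil.
Context {R : realFieldType} {n : nat}.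

Definition point_offset (l : point_label n) : 'rV[R]_n :=
  match l with
  | pt_center => 0
  | pt_plus i => coord_vec R i
  | pt_minus i => - coord_vec R i
  | pt_sum i j => coord_vec R i + coord_vec R j
  end.

Definition basis_eval (b : basis_label n) (z : 'rV[R]_n) : R :=
  match b with
  | bs_one => 1
  | bs_lin i => z 0 i
  | bs_quad i j => if i == j then z 0 i ^+ 2 / 2 else z 0 i * z 0 j
  end.

Lemma phi_basis_labels z : phi z = [seq basis_eval b z | b <- basis_labels n].
Proof.
rewrite /phi /basis_labels /= map_cat map_flatten -!map_comp; congr (_ :: _ ++ _).
by congr flatten; apply: eq_map => i /=; rewrite -map_comp.
Qed.

Lemma sample_points_point_labels x D :
  sample_points x D = [seq x + D *: point_offset l | l <- point_labels n].
Proof.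
rewrite /sample_points /point_labels /= !map_cat map_flatten -!map_comp scaler0 addr0.
congr (_ :: _ ++ _ ++ _); first by apply: eq_map => i /=; rewrite scalerN.
by congr flatten; apply: eq_map => i /=; rewrite -map_comp.
Qed.

Lemma QhatE x D (r c : 'I_(pdim n)) : 0 < D ->
  Qhat x D r c =
  basis_eval (nth bs_one (basis_labels n) c) (point_offset (nth pt_center (point_labels n) r)).
Proof.
move=> D_gt0; rewrite mxE sample_points_point_labels (nth_map pt_center) ?size_point_labels //.
rewrite addrC addKr scalerA mulVf ?gt_eqF // scale1r.
by rewrite phi_basis_labels (nth_map bs_one) ?size_basis_labels.
Qed.

Definition stencil (b : basis_label n) : seq (R * point_label n) :=
  match b with
  | bs_one => [:: (1, pt_center)]
  | bs_lin i => [:: (2^-1, pt_plus i); (- 2^-1, pt_minus i)]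
  | bs_quad i j =>
      if i == j then [:: (1, pt_plus i); (1, pt_minus i); (-2, pt_center)]
      else [:: (1, pt_sum i j); (-1, pt_plus i); (-1, pt_plus j); (1, pt_center)]
  end.

Definition stencil_apply (b : basis_label n) (f : 'rV[R]_n -> R) : R :=
  \sum_(k <- stencil b) k.1 * f (point_offset k.2).

Lemma basis_eval0 b : basis_eval b 0 = (b == bs_one)%:R.
Proof. by case: b => [[k|[k l]]|] /=; rewrite ?mxE //; case: ifP => _; ring. Qed.

Lemma basis_eval_odd_part b (u : 'rV[R]_n) :
  (basis_eval b u - basis_eval b (- u)) / 2 = if b is bs_lin k then u 0 k else 0.
Proof. by case: b => [[k|[k l]]|] /=; rewrite ?mxE; (try case: ifP => _); field. Qed.

Lemma basis_eval_even_part b (u : 'rV[R]_n) :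
  basis_eval b u + basis_eval b (- u) - 2 * basis_eval b 0 =
  if b is bs_quad k l then (if k == l then u 0 k ^+ 2 else 2 * u 0 k * u 0 l) else 0.
Proof. by case: b => [[k|[k l]]|] /=; rewrite ?mxE; (try case: ifP => _); field. Qed.

Lemma basis_eval_polarization b (u v : 'rV[R]_n) :
  basis_eval b (u + v) - basis_eval b u - basis_eval b v + basis_eval b 0 =
  if b is bs_quad k l then
    (if k == l then u 0 k * v 0 k else u 0 k * v 0 l + v 0 k * u 0 l)
  else 0.
Proof. by case: b => [[k|[k l]]|] /=; rewrite ?mxE; (try case: ifP => _); field. Qed.

Lemma stencil_apply_one f : stencil_apply bs_one f = f 0.
Proof. by rewrite /stencil_apply big_cons big_nil /= mul1r addr0. Qed.

Lemma stencil_apply_lin i f :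
  stencil_apply (bs_lin i) f = (f (coord_vec R i) - f (- coord_vec R i)) / 2.
Proof. by rewrite /stencil_apply !big_cons big_nil /=; ring. Qed.

Lemma stencil_apply_diag i f :
  stencil_apply (bs_quad i i) f = f (coord_vec R i) + f (- coord_vec R i) - 2 * f 0.
Proof. by rewrite /stencil_apply /= eqxx !big_cons big_nil /=; ring. Qed.

Lemma stencil_apply_offdiag i j f : i != j ->
  stencil_apply (bs_quad i j) f =
  f (coord_vec R i + coord_vec R j) - f (coord_vec R i) - f (coord_vec R j) + f 0.
Proof. by move=> /negbTE ij; rewrite /stencil_apply /= ij !big_cons big_nil /=; ring. Qed.

Lemma coord_vecE (i k : 'I_n) : coord_vec R i 0 k = (i == k)%:R.
Proof. by rewrite mxE eqxx eq_sym. Qed.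

Lemma quad_label_eq (i j k l : 'I_n) :
  (bs_quad i j == bs_quad k l :> basis_label n) = (i == k) && (j == l).
Proof. by []. Qed.

Lemma stencil_biorthogonal b b' : b \in basis_labels n -> b' \in basis_labels n ->
  stencil_apply b (basis_eval b') = (b == b')%:R.
Proof.
case: b => [[i|[i j]]|] b_in b'_in.
- by rewrite stencil_apply_lin basis_eval_odd_part; case: b' b'_in => [[k|[k l]]|] //= _;
    rewrite coord_vecE.
- have [<-|ne_ij] := eqVneq i j.
    rewrite stencil_apply_diag basis_eval_even_part.
    case: b' b'_in => [[k|[k l]]|] //= _; rewrite !coord_vecE quad_label_eq.
    case: (k =P l) => [->|ne_kl]; first by rewrite andbb expr2 -natrM mulnb andbb.
    rewrite -mulrA -natrM mulnb (_ : (i == k) && (i == l) = false) ?mulr0 //.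
    by apply/andP => -[/eqP ik /eqP il]; apply: ne_kl; rewrite -ik -il.
  have lt_ij : (i < j)%N by rewrite ltn_neqAle ne_ij quad_in_basis_labels.
  rewrite stencil_apply_offdiag // basis_eval_polarization.
  case: b' b'_in => [[k|[k l]]|] //= /quad_in_basis_labels le_kl.
  rewrite !coord_vecE quad_label_eq.
  case: (k =P l) => [<-|ne_kl]; first by rewrite -natrM mulnb.
  (* [i < j] and [k <= l] rule out the transposed match [(i, j) = (l, k)]. *)
  rewrite -!natrM !mulnb (_ : (j == k) && (i == l) = false) ?addr0 //.
  by apply/andP => -[/eqP jk /eqP il]; move: lt_ij; rewrite jk il ltnNge le_kl.
- by rewrite stencil_apply_one basis_eval0 eq_sym.
Qed.

Lemma stencil_points b : b \in basis_labels n ->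
  all (fun k => k.2 \in point_labels n) (stencil b).
Proof.
case: b => [[i|[i j]]|] b_in /=;
  rewrite ?center_in_point_labels ?plus_in_point_labels ?minus_in_point_labels //.
case: eqP => [_|/eqP ne_ij] /=;
  rewrite ?center_in_point_labels ?plus_in_point_labels ?minus_in_point_labels // andbT.
by rewrite sum_in_point_labels // ltn_neqAle ne_ij quad_in_basis_labels.
Qed.

Lemma stencil_weight b : \sum_(k <- stencil b) `|k.1| <= 4.
Proof.
case: b => [[i|[i j]]|] /=; last by rewrite big_cons big_nil normr1; lra.
  by rewrite !big_cons big_nil /= normrN normfV normr_nat; lra.
by case: eqP => _; rewrite !big_cons big_nil /= ?normrN normr1 ?normr_nat; lra.
Qed.

Definition stencil_coef (b : basis_label n) (l : point_label n) : R :=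
  \sum_(k <- stencil b) k.1 * (l == k.2)%:R.

Lemma sum_point_labels_stencil b (w : R * point_label n -> R) (F : point_label n -> R) :
  b \in basis_labels n ->
  \sum_(l <- point_labels n) (\sum_(k <- stencil b) w k * (l == k.2)%:R) * F l =
  \sum_(k <- stencil b) w k * F k.2.
Proof.
move=> /stencil_points/allP k_in; under eq_bigr => l _ do rewrite mulr_suml.
rewrite exchange_big /=; apply: eq_big_seq => k /k_in k2_in.
by under eq_bigr => l _ do rewrite mulrAC; rewrite sum_seq_indicator ?point_labels_uniq.
Qed.

Lemma sum_abs_stencil_coef b : b \in basis_labels n ->
  \sum_(l <- point_labels n) `|stencil_coef b l| <= 4.
Proof.
move=> b_in; apply: le_trans (stencil_weight b).
rewrite -(eq_bigr _ (fun k _ => mulr1 `|k.1|)).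
rewrite -(sum_point_labels_stencil b (fun k => `|k.1|) (fun=> 1) b_in).
apply: ler_sum => l _; rewrite mulr1; apply: le_trans (ler_norm_sum _ _ _) _.
by apply: ler_sum => k _; rewrite normrM normr_nat.
Qed.

Definition stencil_mx : 'M[R]_(pdim n) :=
  \matrix_(c, r) stencil_coef (nth bs_one (basis_labels n) c) (nth pt_center (point_labels n) r).

Lemma sum_point_labels (F : point_label n -> R) :
  \sum_(r < pdim n) F (nth pt_center (point_labels n) r) = \sum_(l <- point_labels n) F l.
Proof. by rewrite (big_nth pt_center) size_point_labels big_mkord. Qed.

Lemma stencil_mx_mulQhat x D : 0 < D -> stencil_mx *m Qhat x D = 1%:M.
Proof.
move=> D_gt0; apply/matrixP => c c'; rewrite !mxE.
set b := nth bs_one (basis_labels n) c; set b' := nth bs_one (basis_labels n) c'.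
under eq_bigr => r _ do rewrite mxE QhatE //.
rewrite (sum_point_labels (fun l => stencil_coef b l * basis_eval b' (point_offset l))).
rewrite sum_point_labels_stencil ?mem_nth ?size_basis_labels //.
rewrite [LHS]stencil_biorthogonal ?mem_nth ?size_basis_labels //.
by rewrite nth_uniq ?size_basis_labels ?basis_labels_uniq.
Qed.

Lemma mx_norm_inf_stencil_mx : mx_norm_inf stencil_mx <= 4.
Proof.
apply: mx_norm_inf_le => [|c]; first by rewrite ler0n.
set b := nth bs_one (basis_labels n) c.
under eq_bigr => r _ do rewrite mxE.
rewrite (sum_point_labels (fun l => `|stencil_coef b l|)).
by rewrite sum_abs_stencil_coef ?mem_nth ?size_basis_labels.
Qed.

End Stencil.

Theorem lemma5p6 (R : realFieldType) (n : nat) (x : 'rV[R]_n) (D : R) :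
  0 < D ->
  Qhat x D \in unitmx /\ mx_norm_inf (invmx (Qhat x D)) <= 8.
Proof.
move=> D_gt0; have stencil_left_inv := stencil_mx_mulQhat x D D_gt0.
have [_ Qhat_unit] := mulmx1_unit stencil_left_inv.
split => //; rewrite (invmx_left stencil_left_inv).
by apply: le_trans mx_norm_inf_stencil_mx _; rewrite ler_nat.
Qed.
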